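(* Let $V$ be a finite nonempty set, $c\in\mathbb{R}^{P_V}$ and $\hat x$ a maximally specific partial function on $P_V$. Define $x^+\in\{0,1\}^{P_V}$ by $x^+_e=1$ if $e\notin\operatorname{dom}(\hat x)$ and $c_e\ge0$; $x^+_e=0$ if $e\notin\operatorname{dom}(\hat x)$ and $c_e<0$; $x^+_e=\hat x_e$ if $e\in\operatorname{dom}(\hat x)$. Let $ij\in P_V\setminus\operatorname{dom}(\hat x)$ with $c_{ij}\ge0$. If $x^+\in X_V[\hat x]$, then $$\max_{x\in X_V[\hat x],\,x_{ij}=1}\varphi_c(x)=\varphi_c(x^+),$$ and, writing $\mathcal U=\{U\subseteq V\mid ij\in U\times(V\setminus U),\ (U\times(V\setminus U))\cap\hat x^{-1}(1)=\emptyset\}$ and $\sigma_U(x)$ for the vector with $\sigma_U(x)_{pq}=0$ if $pq\in U\times(V\setminus U)$ and $\sigma_U(x)_{pq}=x_{pq}$ otherwise, $$\max_{x\in X_V[\hat x],\,x_{ij}=0}\varphi_c(x)=\max_{U\in\mathcal U}\varphi_c(\sigma_U(x^+))=\varphi_c(x^+)-\min_{U\in\mathcal U}\sum_{pq\in(U\times(V\setminus U))\setminus\hat x^{-1}(0)}c_{pq}^+ .$$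
   Context: $P_V=\{pq\in V^2\mid p\neq q\}$; $X_V$ is the set of $x\in\{0,1\}^{P_V}$ with $x_{pq}+x_{qr}-x_{pr}\le 1$ for all pairwise distinct $p,q,r\in V$; $\varphi_c(x)=\sum_{pq\in P_V}c_{pq}x_{pq}$. A partial function $\tilde x$ is a map from $\operatorname{dom}(\tilde x)\subseteq P_V$ to $\{0,1\}$, $\tilde x^{-1}(b)$ the pairs mapped to $b$, and $X_V[\tilde x]=\{x\in X_V\mid x_{pq}=\tilde x_{pq}\ \forall pq\in\operatorname{dom}(\tilde x)\}$. A pair $pq$ is decided if $x_{pq}=x'_{pq}$ for all $x,x'\in X_V[\tilde x]$; $\tilde x$ is maximally specific if $X_V[\tilde x]\ne\emptyset$ and the decided pairs are exactly $\operatorname{dom}(\tilde x)$. For real $a$, $a^+=\max(a,0)$. *)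

From mathcomp Require Import all_boot all_order all_algebra.
Set Implicit Arguments. Unset Strict Implicit. Unset Printing Implicit Defensive.
Import Order.TTheory GRing.Theory Num.Theory.
Local Open Scope ring_scope.

Definition P (V : finType) := {pq : V * V | pq.1 != pq.2}.

Definition pair_of (V : finType) (p q : V) (h : p != q) : P V :=
  @exist _ (fun pq : V * V => pq.1 != pq.2) (p, q) h.

Definition in_X (V : finType) (x : {ffun P V -> bool}) : Prop :=
  forall (p q r : V) (hpq : p != q) (hqr : q != r) (hpr : p != r),
    (x (pair_of hpq) + x (pair_of hqr) <= 1 + x (pair_of hpr))%N.

(* partial functions P_V -> {0,1}: None = not in the domain *)
Definition partial (V : finType) := {ffun P V -> option bool}.

Definition in_Xr (V : finType) (xh : partial V) (x : {ffun P V -> bool}) : Prop :=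
  in_X x /\ forall e b, xh e = Some b -> x e = b.

Definition decided (V : finType) (xh : partial V) (e : P V) : Prop :=
  forall x x', in_Xr xh x -> in_Xr xh x' -> x e = x' e.

Definition maximally_specific (V : finType) (xh : partial V) : Prop :=
  (exists x, in_Xr xh x) /\ forall e, decided xh e <-> xh e != None.

Definition phi (R : realFieldType) (V : finType) (c : P V -> R)
  (x : {ffun P V -> bool}) : R := \sum_(e : P V) c e * (x e)%:R.

Definition xplus (R : realFieldType) (V : finType) (c : P V -> R) (xh : partial V)
  : {ffun P V -> bool} :=
  [ffun e => match xh e with Some b => b | None => 0 <= c e end].

Definition cut (V : finType) (U : {set V}) (e : P V) : bool :=
  ((val e).1 \in U) && ((val e).2 \notin U).

Definition sigmaU (V : finType) (U : {set V}) (x : {ffun P V -> bool})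
  : {ffun P V -> bool} := [ffun e => if cut U e then false else x e].

Definition calU (V : finType) (xh : partial V) (ij : P V) (U : {set V}) : Prop :=
  cut U ij /\ forall e, cut U e -> xh e != Some true.

Definition is_max (R : realFieldType) (T : Type) (S : T -> Prop) (f : T -> R) (m : R)
  : Prop := (exists2 t, S t & f t = m) /\ forall t, S t -> f t <= m.
Definition is_min (R : realFieldType) (T : Type) (S : T -> Prop) (f : T -> R) (m : R)
  : Prop := (exists2 t, S t & f t = m) /\ forall t, S t -> m <= f t.

From mathcomp Require Import all_boot all_order all_algebra.
From mathcomp Require Import lra.
Set Implicit Arguments. Unset Strict Implicit. Unset Printing Implicit Defensive.
Import Order.TTheory GRing.Theory Num.Theory.
Local Open Scope ring_scope.

(* x^+ maximizes phi_c termwise over all 0/1 vectors agreeing with xh, and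
   zeroing a cut removes exactly the positive weights of its undecided pairs,
   so phi_c (sigma_U x^+) = phi_c x^+ - w(U).  A feasible x with x_ij = 0
   vanishes on the cut of U = {i} u {p | x_ip = 1} (by transitivity), and U is
   in the family; hence phi_c x = phi_c (sigma_U x) <= phi_c (sigma_U x^+).
   The family is nonempty because ij is undecided, so some feasible x has
   x_ij = 0. *)

Section Cuts.
Variable V : finType.

Lemma in_X_sigmaU (U : {set V}) (x : {ffun P V -> bool}) :
  in_X x -> in_X (sigmaU U x).
Proof.
move=> Hx p q r hpq hqr hpr; have := Hx p q r hpq hqr hpr.
rewrite /sigmaU !ffunE /cut /=.
by case: (p \in U); case: (q \in U); case: (r \in U);
  case: (x (pair_of hpq)); case: (x (pair_of hqr)); case: (x (pair_of hpr)).
Qed.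

Lemma in_Xr_sigmaU (xh : partial V) (U : {set V}) (x : {ffun P V -> bool}) :
  (forall e, cut U e -> xh e != Some true) ->
  in_Xr xh x -> in_Xr xh (sigmaU U x).
Proof.
move=> HU [Hx Hxh]; split; first exact: in_X_sigmaU.
move=> e b He; rewrite /sigmaU ffunE; case Ce: (cut U e); last exact: Hxh.
by move: (HU e Ce); rewrite He; case: b {He}.
Qed.

Lemma sigmaU_id (U : {set V}) (x : {ffun P V -> bool}) :
  (forall e, cut U e -> x e = false) -> sigmaU U x = x.
Proof.
by move=> Hx; apply/ffunP => e; rewrite ffunE; case Ce: (cut U e); rewrite // Hx.
Qed.

Definition succ_set (i : V) (x : {ffun P V -> bool}) : {set V} :=
  [set p | (p == i) || [exists e : P V, (val e == (i, p)) && x e]].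

Lemma succ_set_cut (i : V) (x : {ffun P V -> bool}) (e : P V) :
  in_X x -> cut (succ_set i x) e -> x e = false.
Proof.
move: e => [[p q] hpq] Hx; rewrite /cut /= !inE => /andP [Hp Hq].
apply/negbTE/negP => xpq; move/negP: Hq; apply.
have [//|hiq] := eqVneq q i.
case/orP: Hp => [/eqP Ep | /existsP [[[a b] hab] /andP [/eqP [Ea Eb] xab]]].
  by subst p; apply/orP; right; apply/existsP; exists (exist _ (i, q) hpq); rewrite eqxx.
subst a b; have hiq' : i != q by rewrite eq_sym.
have := Hx i p q hab hpq hiq'.
rewrite [x (pair_of hab)]xab [x (pair_of hpq)]xpq.
case xiq: (x (pair_of hiq')) => // _.
by apply/orP; right; apply/existsP; exists (pair_of hiq'); rewrite eqxx xiq.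
Qed.

Definition calUb (xh : partial V) (ij : P V) (U : {set V}) : bool :=
  cut U ij && [forall e, cut U e ==> (xh e != Some true)].

Lemma calUP (xh : partial V) (ij : P V) (U : {set V}) :
  reflect (calU xh ij U) (calUb xh ij U).
Proof.
apply: (iffP andP) => [[Hij /forallP HU] | [Hij HU]]; split => //.
  by move=> e; apply/implyP.
by apply/forallP => e; apply/implyP/HU.
Qed.

Lemma calU_succ_set (xh : partial V) (ij : P V) (x : {ffun P V -> bool}) :
  in_Xr xh x -> x ij = false -> calU xh ij (succ_set (val ij).1 x).
Proof.
move=> [Hx Hxh] xij; split.
  rewrite /cut !inE eqxx /= negb_or; apply/andP; split.
    by move: (valP ij); rewrite eq_sym.
  apply/existsP => -[e /andP [/eqP ve xe]].
  have Eij : e = ij by apply: val_inj; move: ve => /= ->; case: (val ij).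
  by move: xe; rewrite Eij xij.
move=> e Ce; apply/eqP => He.
by move: (succ_set_cut Hx Ce); rewrite (Hxh _ _ He).
Qed.

Lemma calU_nonempty (xh : partial V) (ij : P V) :
  maximally_specific xh -> xh ij = None -> exists U, calU xh ij U.
Proof.
move=> [_ Hdec] Hij; have [/existsP [U /calUP HU] | noU] := boolP [exists U, calUb xh ij U].
  by exists U.
suff : decided xh ij by move/(Hdec ij); rewrite Hij.
have Hone y : in_Xr xh y -> y ij = true.
  move=> Hy; apply: contraNT noU => /negbTE yij; apply/existsP.
  by exists (succ_set (val ij).1 y); apply/calUP/calU_succ_set.
by move=> y y' Hy Hy'; rewrite !Hone.
Qed.

End Cuts.

Section Objective.
Variables (R : realFieldType) (V : finType) (c : P V -> R) (xh : partial V).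

Definition cut_weight (U : {set V}) : R :=
  \sum_(e : P V | cut U e && (xh e != Some false)) Num.max (c e) 0.

Lemma xplus_term_ge (x : {ffun P V -> bool}) (e : P V) :
  (forall b, xh e = Some b -> x e = b) ->
  c e * (x e)%:R <= c e * (xplus c xh e)%:R.
Proof.
rewrite /xplus ffunE; case: (xh e) => [b /(_ b erefl) -> //|_].
by case: (x e); case: (leP 0 (c e)) => /= ?; rewrite ?mulr1 ?mulr0 //; lra.
Qed.

Lemma phi_sigmaU_le_xplus (U : {set V}) (x : {ffun P V -> bool}) :
  (forall e b, xh e = Some b -> x e = b) ->
  phi c (sigmaU U x) <= phi c (sigmaU U (xplus c xh)).
Proof.
move=> Hxh; apply: ler_sum => e _.
have := xplus_term_ge (Hxh e); rewrite /sigmaU !ffunE.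
by case: (cut U e).
Qed.

Lemma phi_le_xplus (x : {ffun P V -> bool}) :
  (forall e b, xh e = Some b -> x e = b) -> phi c x <= phi c (xplus c xh).
Proof.
move=> Hxh; have := phi_sigmaU_le_xplus set0 Hxh.
by rewrite !sigmaU_id // => e; rewrite /cut inE.
Qed.

Lemma phi_sigmaU_xplus (U : {set V}) :
  (forall e, cut U e -> xh e != Some true) ->
  phi c (sigmaU U (xplus c xh)) = phi c (xplus c xh) - cut_weight U.
Proof.
move=> HU; rewrite /cut_weight big_mkcond /phi -sumrB; apply: eq_bigr => e _.
rewrite /sigmaU /xplus !ffunE; case Ce: (cut U e) => /=; last by rewrite subr0.
move: (HU e Ce); case: (xh e) => [[]|] //= _; first by rewrite mulr0 subrr.
by case: (leP 0 (c e)) => h; rewrite ?mulr1 ?mulr0 ?subrr // max_l ?subrr.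
Qed.

Lemma phi_le_sigmaU_xplus (i : V) (x : {ffun P V -> bool}) :
  in_Xr xh x -> phi c x <= phi c (sigmaU (succ_set i x) (xplus c xh)).
Proof.
move=> [Hx Hxh]; rewrite -[X in phi c X](sigmaU_id (U := succ_set i x)).
  exact: phi_sigmaU_le_xplus.
by move=> e; apply: succ_set_cut.
Qed.

End Objective.

Theorem proposition7p2 (R : realFieldType) (V : finType) (HV : (0 < #|V|)%N)
  (c : P V -> R) (xh : partial V) (ij : P V) :
  maximally_specific xh ->
  xh ij = None -> 0 <= c ij ->
  in_Xr xh (xplus c xh) ->
  is_max (fun x => in_Xr xh x /\ x ij = true) (phi c) (phi c (xplus c xh))
  /\ exists m : R,
       is_min (calU xh ij)
         (fun U => \sum_(e : P V | cut U e && (xh e != Some false)) Num.max (c e) 0) m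
    /\ is_max (fun x => in_Xr xh x /\ x ij = false) (phi c) (phi c (xplus c xh) - m)
    /\ is_max (calU xh ij) (fun U => phi c (sigmaU U (xplus c xh)))
              (phi c (xplus c xh) - m).
Proof.
move=> Hms Hij Hcij Hxp; split.
  split; first by exists (xplus c xh); rewrite // /xplus ffunE Hij.
  by move=> x [[_ Hxh] _]; apply: phi_le_xplus.
have [U0 /calUP HU0] := calU_nonempty Hms Hij.
have [Um /calUP HUm Hmin] := arg_minP (cut_weight c xh) HU0.
have {}Hmin U : calU xh ij U -> cut_weight c xh Um <= cut_weight c xh U.
  by move/calUP; apply: Hmin.
have sigma_opt U : calU xh ij U ->
    phi c (sigmaU U (xplus c xh)) <= phi c (xplus c xh) - cut_weight c xh Um.
  by move=> HU; rewrite phi_sigmaU_xplus ?lerB ?Hmin //; case: HU.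
have phi_Um : phi c (sigmaU Um (xplus c xh)) = phi c (xplus c xh) - cut_weight c xh Um.
  by rewrite phi_sigmaU_xplus //; case: HUm.
exists (cut_weight c xh Um); split; first by split; [exists Um | ].
split; split.
- exists (sigmaU Um (xplus c xh)) => //; split.
    by apply: in_Xr_sigmaU => //; case: HUm.
  by rewrite /sigmaU ffunE HUm.1.
- move=> x [Hx xij]; apply: le_trans (phi_le_sigmaU_xplus c (val ij).1 Hx) _.
  by apply/sigma_opt/calU_succ_set.
- by exists Um.
- exact: sigma_opt.
Qed.
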